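(* Let $L$ be a bounded lattice, $k\in\mathbb{N}^*$, and $\otimes$ a t-norm on $L$ that is both $\wedge$-distributive and $\vee$-distributive and such that $\langle L,\otimes\rangle$ is divisible. A function $F:L^2\to L$ is $\otimes^k$-homogeneous, has $1_L$ as neutral element, and satisfies $F(x,y)=F(x\wedge y,x\vee y)$ for all $x,y\in L$ if and only if $$F(x,y)=(x\wedge y)\otimes(x\vee y)_\otimes^{(k-1)}\quad\text{for all }x,y\in L.$$
   Context: A t-norm on $L$ is a commutative, associative map $L^2\to L$, non-decreasing in each argument, with neutral element $1_L$. It is $\wedge$-distributive if $x\otimes(y\wedge z)=(x\otimes y)\wedge(x\otimes z)$ and $\vee$-distributive if $x\otimes(y\vee z)=(x\otimes y)\vee(x\otimes z)$, for all $x,y,z$. $\langle L,\otimes\rangle$ is divisible if for all $x,y$ with $y\le_Lx$ there is $z$ with $y=x\otimes z$. Powers: $\lambda_\otimes^{(0)}=1_L$, $\lambda_\otimes^{(1)}=\lambda$, $\lambda_\otimes^{(m)}=\lambda\otimes\lambda_\otimes^{(m-1)}$ for $m\ge2$. $F:L^2\to L$ is $\otimes^k$-homogeneous if $F(\lambda\otimes x,\lambda\otimes y)=\lambda_\otimes^{(k)}\otimes F(x,y)$ for all $\lambda,x,y\in L$. $1_L$ is a neutral element of $F$ if $F(x,1_L)=F(1_L,x)=x$ for all $x$. *)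

From HB Require Import structures.
From mathcomp Require Import all_boot all_order.
Set Implicit Arguments. Unset Strict Implicit. Unset Printing Implicit Defensive.
Import Order.Theory.
Local Open Scope order_scope.

Section TNorm.
Context {disp : Order.disp_t} {L : tbLatticeType disp}.

Definition is_tnorm (T : L -> L -> L) : Prop :=
  (forall x y, T x y = T y x) /\
  (forall x y z, T x (T y z) = T (T x y) z) /\
  (forall x y z, y <= z -> T x y <= T x z) /\
  (forall x y z, x <= y -> T x z <= T y z) /\
  (forall x, T x \top = x).

Definition meet_distributive (T : L -> L -> L) : Prop :=
  forall x y z, T x (y `&` z) = (T x y) `&` (T x z).

Definition join_distributive (T : L -> L -> L) : Prop :=
  forall x y z, T x (y `|` z) = (T x y) `|` (T x z).

Definition divisible (T : L -> L -> L) : Prop :=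
  forall x y, y <= x -> exists z, y = T x z.

Fixpoint tpow (T : L -> L -> L) (lam : L) (m : nat) : L :=
  match m with
  | 0 => \top
  | 1 => lam
  | m'.+1 => T lam (tpow T lam m')
  end.

Definition homogeneous (T : L -> L -> L) (k : nat) (F : L -> L -> L) : Prop :=
  forall lam x y, F (T lam x) (T lam y) = T (tpow T lam k) (F x y).

Definition has_neutral_top (F : L -> L -> L) : Prop :=
  forall x, F x \top = x /\ F \top x = x.

End TNorm.

From HB Require Import structures.
From mathcomp Require Import all_boot all_order.
Import Order.Theory.
Local Open Scope order_scope.

(* Write a = x `&` y <= b = x `|` y.  By divisibility a = b (x) z for some z, so
   homogeneity with lambda = b gives F a b = F (b (x) z) (b (x) 1) = b^(k) (x) F z 1
   = b^(k) (x) z = a (x) b^(k-1).  Conversely, the closed form is homogeneous because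
   (x) distributes over meets and joins and powers are multiplicative:
   (lambda (x) b)^(m) = lambda^(m) (x) b^(m). *)

Lemma meet_le_join {disp : Order.disp_t} {L : latticeType disp} (x y : L) :
  x `&` y <= x `|` y.
Proof. exact: le_trans (leIl x y) (leUl x y). Qed.

Section TNormPowers.
Context {disp : Order.disp_t} {L : tbLatticeType disp} (T : L -> L -> L).
Hypothesis TC : forall x y, T x y = T y x.
Hypothesis TA : forall x y z, T x (T y z) = T (T x y) z.
Hypothesis T1 : forall x, T x \top = x.

Lemma tpowS lam m : tpow T lam m.+1 = T lam (tpow T lam m).
Proof. by case: m => [|m] //=; rewrite T1. Qed.

Lemma tmulACA a b c d : T (T a b) (T c d) = T (T a c) (T b d).
Proof. by rewrite -TA (TA b c d) (TC b c) -(TA c b d) TA. Qed.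

Lemma tpowMn a b m : tpow T (T a b) m = T (tpow T a m) (tpow T b m).
Proof. by elim: m => [|m IH]; rewrite ?T1 // !tpowS IH tmulACA. Qed.

Lemma tpow1n m : tpow T \top m = \top.
Proof. by elim: m => [|m IH] //; rewrite tpowS IH T1. Qed.

End TNormPowers.

Section MeetJoinPowerMean.
Context {disp : Order.disp_t} {L : tbLatticeType disp} (T : L -> L -> L) (k : nat).
Hypothesis k_gt0 : (0 < k)%N.
Hypothesis TC : forall x y, T x y = T y x.
Hypothesis TA : forall x y z, T x (T y z) = T (T x y) z.
Hypothesis T1 : forall x, T x \top = x.

Lemma tpow_predK lam : tpow T lam k = T lam (tpow T lam (k - 1)).
Proof. by rewrite -tpowS // subn1 prednK. Qed.

Lemma homogeneous_meet_join_closed_form (F : L -> L -> L) :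
  divisible T -> homogeneous T k F -> has_neutral_top F ->
  (forall x y, F x y = F (x `&` y) (x `|` y)) ->
  forall x y, F x y = T (x `&` y) (tpow T (x `|` y) (k - 1)).
Proof.
move=> divT homF neuF meet_joinF x y; rewrite meet_joinF.
set a := x `&` y; set b := x `|` y.
have [z ->] := divT b a (meet_le_join x y).
have -> : F (T b z) b = F (T b z) (T b \top) by rewrite T1.
rewrite homF (proj1 (neuF z)) tpow_predK.
by rewrite -!TA (TC (tpow T b (k - 1)) z).
Qed.

Section ClosedForm.
Variable F : L -> L -> L.
Hypothesis F_closed_form :
  forall x y, F x y = T (x `&` y) (tpow T (x `|` y) (k - 1)).

Lemma closed_form_homogeneous :
  meet_distributive T -> join_distributive T -> homogeneous T k F.
Proof.
move=> meetT joinT lam x y.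
rewrite !F_closed_form -meetT -joinT tpowMn // [tpow T lam k]tpow_predK.
exact: tmulACA.
Qed.

Lemma closed_form_neutral_top : has_neutral_top F.
Proof.
by move=> x; rewrite !F_closed_form meetx1 joinx1 meet1x join1x tpow1n // T1.
Qed.

Lemma closed_form_meet_join x y : F x y = F (x `&` y) (x `|` y).
Proof.
have le_xy := meet_le_join x y.
by rewrite !F_closed_form (meet_l le_xy) (join_r le_xy).
Qed.

End ClosedForm.
End MeetJoinPowerMean.

Theorem mainTheorem12 (disp : Order.disp_t) (L : tbLatticeType disp)
  (k : nat) (T : L -> L -> L) (F : L -> L -> L) :
  (0 < k)%N ->
  is_tnorm T -> meet_distributive T -> join_distributive T -> divisible T ->
  (homogeneous T k F /\ has_neutral_top F /\
     (forall x y, F x y = F (x `&` y) (x `|` y)))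
  <-> (forall x y, F x y = T (x `&` y) (tpow T (x `|` y) (k - 1))).
Proof.
move=> k_gt0 [TC [TA [_ [_ T1]]]] meetT joinT divT; split.
- move=> [homF [neuF meet_joinF]].
  exact: homogeneous_meet_join_closed_form.
- move=> F_closed_form; split; [|split].
  + exact: closed_form_homogeneous.
  + exact: closed_form_neutral_top.
  + exact: closed_form_meet_join.
Qed.
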